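(* Consider an instance of Bin Packing with Usage Cost: items whose distinct sizes are the positive integers $w'_1,\dots,w'_{n'}$, with $q_d\ge 1$ items of size $w'_d$, and $m$ bins, bin $j$ having positive integer capacity $C_j$, fixed cost $f_j\ge 0$ and unit cost $c_j\ge0$; let $C_{\max}=\max_j C_j$. Let $z_2^*$ be the optimal value of the linear relaxation of the cutting-stock formulation and $z_3^*$ the optimal value of the linear relaxation of the arc-flow formulation, both defined below, and assume the former is feasible. Then $z_3^*\le z_2^*$. Cutting-stock relaxation: for each bin $j$, a pattern is an integer vector $g=(g_1,\dots,g_{n'})$ with $0\le g_d\le q_d$ and $\sum_d g_dw'_d\le C_j$; $I_j$ is the set of all patterns for bin $j$, and the $i$-th pattern of bin $j$ is $(g_{1ij},\dots,g_{n'ij})$, with cost $co_{ij}=f_j+c_j\sum_d g_{dij}w'_d$ if the pattern is nonzero and $co_{ij}=0$ if it is the zero vector. $z_2^*=\min\sum_{j=1}^m\sum_{i\in I_j}co_{ij}p_{ij}$ subject to $\sum_{j=1}^m\sum_{i\in I_j}g_{dij}p_{ij}=q_d$ for all $d$, $\sum_{i\in I_j}p_{ij}=1$ for all $j$, and $p_{ij}\ge 0$. Arc-flow relaxation: let $I$ be the set of arcs $(a,a+w'_d)$ with $a\ge 0$ integer, $d\in\{1,\dots,n'\}$ and $a+w'_d\le C_{\max}$, with a variable $x_{ab}\ge 0$ for each arc $(a,b)\in I$, and a variable $y_{aj}\in[0,1]$ for each bin $j$ and $a\in\{0,\dots,C_{\max}\}$ (representing an arc from node $a$ to a sink, for bin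 $j$), with cost $co_{aj}=f_j+a\,c_j$ for $a>0$ and $co_{0j}=0$. $z_3^*=\min\sum_{j=1}^m\sum_{a=0}^{C_{\max}}co_{aj}y_{aj}$ subject to: for every $b\in\{1,\dots,C_{\max}\}$, $\sum_{(a,b)\in I}x_{ab}-\sum_{(b,c)\in I}x_{bc}-\sum_{j=1}^m y_{bj}=0$; $-\sum_{(0,c)\in I}x_{0c}-\sum_{j=1}^m y_{0j}=-m$; $\sum_{a=0}^{C_j}y_{aj}=1$ for every $j$; $\sum_{(a,a+w'_d)\in I}x_{a,a+w'_d}=q_d$ for every $d$; and $y_{aj}=0$ for every $j$ and $a\in\{C_j+1,\dots,C_{\max}\}$.
   Context: Bin Packing with Usage Cost: each item must be assigned to exactly one bin, the total size $l_j$ of the items in bin $j$ may not exceed $C_j$, a bin is used if it contains at least one item, a used bin $j$ costs $f_j+c_jl_j$, and the total cost is to be minimised. Both formulations above are linear relaxations of exact integer formulations of this problem (with $p_{ij}\in\{0,1\}$, $x_{ab}\in\mathbb{N}$, $y_{aj}\in\{0,1\}$ respectively). *)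

From HB Require Import structures.
From mathcomp Require Import all_boot all_order all_algebra.
From mathcomp Require Import all_classical all_reals ereal.
Set Implicit Arguments. Unset Strict Implicit. Unset Printing Implicit Defensive.
Import Order.TTheory GRing.Theory Num.Theory.
Local Open Scope ring_scope.
Local Open Scope classical_set_scope.

Section BPUC.
Variables (R : realType) (n m : nat) (w q : 'I_n -> nat) (C : 'I_m -> nat)
          (f c : 'I_m -> R).

Definition Cmax : nat := (\max_(j < m) C j)%N.
(* upper bound for pattern entries, so that patterns form a finite type *)
Definition qmax : nat := (\max_(d < n) q d)%N.

Definition pat := {ffun 'I_n -> 'I_(qmax.+1)}.

Definition is_pattern (j : 'I_m) (g : pat) : bool :=
  [forall d, (g d <= q d)%N] && (\sum_(d < n) g d * w d <= C j)%N.

Definition pat_cost (j : 'I_m) (g : pat) : R :=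
  if [forall d, (g d : nat) == 0%N] then 0
  else f j + c j * (\sum_(d < n) g d * w d)%N%:R.

Definition cs_feasible (p : 'I_m -> pat -> R) : Prop :=
  (forall j g, is_pattern j g -> 0 <= p j g) /\
  (forall d : 'I_n,
     \sum_(j < m) \sum_(g : pat | is_pattern j g) (g d : nat)%:R * p j g
       = (q d)%:R) /\
  (forall j : 'I_m, \sum_(g : pat | is_pattern j g) p j g = 1).

Definition cs_obj (p : 'I_m -> pat -> R) : R :=
  \sum_(j < m) \sum_(g : pat | is_pattern j g) pat_cost j g * p j g.

Definition z2 : \bar R :=
  ereal_inf [set (cs_obj p)%:E | p in [set p | cs_feasible p]].

Definition node := 'I_(Cmax.+1).

(* (a,b) in I : b = a + w'_d for some d (and b <= C_max by typing) *)
Definition is_arc (e : node * node) : bool :=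
  [exists d : 'I_n, (e.2 : nat) == (e.1 + w d)%N].

Definition sink_cost (a : node) (j : 'I_m) : R :=
  if (a : nat) == 0%N then 0 else f j + (a : nat)%:R * c j.

Definition af_feasible (x : node * node -> R) (y : node -> 'I_m -> R) : Prop :=
  (forall e, is_arc e -> 0 <= x e) /\
  (forall a j, 0 <= y a j <= 1) /\
  (forall b : node, (0 < b)%N ->
     \sum_(e | is_arc e && ((e.2 : nat) == b)) x e
     - \sum_(e | is_arc e && ((e.1 : nat) == b)) x e
     - \sum_(j < m) y b j = 0) /\
  (forall b : node, (b : nat) = 0%N ->
     - \sum_(e | is_arc e && ((e.1 : nat) == 0%N)) x e
     - \sum_(j < m) y b j = - m%:R) /\
  (forall j : 'I_m, \sum_(a : node | (a <= C j)%N) y a j = 1) /\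
  (forall d : 'I_n,
     \sum_(e | is_arc e && ((e.2 : nat) == e.1 + w d)%N) x e = (q d)%:R) /\
  (forall (j : 'I_m) (a : node), (C j < a)%N -> y a j = 0).

Definition af_obj (y : node -> 'I_m -> R) : R :=
  \sum_(j < m) \sum_(a : node) sink_cost a j * y a j.

Definition z3 : \bar R :=
  ereal_inf [set (af_obj y)%:E | y in
     [set y | exists x, af_feasible x y]].

End BPUC.

From HB Require Import structures.
From mathcomp Require Import all_boot all_order all_algebra.
From mathcomp Require Import all_classical all_reals ereal.
From mathcomp Require Import zify ring.
Import Order.TTheory GRing.Theory Num.Theory.

Set Implicit Arguments.
Unset Strict Implicit.
Unset Printing Implicit Defensive.

(* Every fractional cutting-stock solution is mapped to an arc-flow solution
   of the same cost.  A pattern g of bin j is read as the path from node 0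
   to node load g in the arc-flow graph that stacks its items one by one,
   followed by the sink arc of bin j at node load g.  Weighting each
   path by p_{gj} and summing gives x and y: flow conservation holds path by
   path, the arcs of length w_d used by g are exactly its g_d items of size
   w_d, and the sink arc costs f_j + c_j load g, which is the cost of g. *)

Fixpoint walk_arcs (a : nat) (s : seq nat) : seq (nat * nat) :=
  if s is k :: s' then (a, a + k)%N :: walk_arcs (a + k) s' else [::].

Lemma mem_walk_arcs a s u : u \in walk_arcs a s ->
  exists2 k, k \in s & u.2 = (u.1 + k)%N /\ (u.2 <= a + sumn s)%N.
Proof.
elim: s a => [|k s IHs] a //=.
rewrite in_cons => /orP[/eqP -> | /IHs[k' s_k' [-> u2_le]]].
  by exists k; rewrite ?mem_head // leq_add2l leq_addr.
by exists k'; [rewrite in_cons s_k' orbT | rewrite addnA].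
Qed.

Lemma walk_arcs_conservation a s b :
  (count (fun u => u.2 == b) (walk_arcs a s) + (a == b) =
   count (fun u => u.1 == b) (walk_arcs a s) + (a + sumn s == b))%N.
Proof.
elim: s a => [|k s IHs] a /=; first by rewrite addn0.
have := IHs (a + k)%N; rewrite addnA.
by case: (a + k == b)%N; case: (a == b); case: (a + k + sumn s == b)%N => /=; lia.
Qed.

Lemma count_walk_arcs_length a s k :
  count (fun u => u.2 == u.1 + k)%N (walk_arcs a s) = count_mem k s.
Proof. by elim: s a => [|k' s IHs] a //=; rewrite IHs eqn_add2l. Qed.

Lemma sum_count_mem (T : finType) (Q : pred T) (s : seq T) :
  (\sum_(e | Q e) count_mem e s)%N = count Q s.
Proof.
elim: s => [|x s IHs] /=; first by rewrite big1.
rewrite big_split /= IHs; congr (_ + _)%N.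
case Qx: (Q x).
  by rewrite (bigD1 x) //= eqxx big1 // => e /andP[_ /negbTE]; rewrite eq_sym => ->.
by rewrite big1 // => e Qe; case: eqP => // xe; rewrite xe Qe in Qx.
Qed.

Section PatternPaths.
Local Open Scope ring_scope.
Variables (R : realType) (n m : nat) (w q : 'I_n -> nat) (C : 'I_m -> nat)
          (f c : 'I_m -> R).
Hypothesis w_gt0 : forall d, (0 < w d)%N.
Hypothesis w_inj : injective w.

Local Notation is_pattern := (@is_pattern n m w q C).
Local Notation node := (node C).

Definition load (g : pat q) : nat := (\sum_(d < n) g d * w d)%N.

Definition item_sizes (g : pat q) : seq nat :=
  flatten [seq nseq (g d : nat) (w d) | d <- index_enum 'I_n].

Lemma sumn_item_sizes g : sumn (item_sizes g) = load g.
Proof.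
rewrite /item_sizes sumn_flatten -map_comp sumnE big_map.
by apply: eq_bigr => d _; rewrite /= sumn_nseq mulnC.
Qed.

Lemma count_item_sizes g d : count_mem (w d) (item_sizes g) = g d.
Proof.
rewrite /item_sizes count_flatten -map_comp sumnE big_map.
rewrite (bigD1 d) //= count_nseq /= eqxx mul1n big1 ?addn0 // => d' /negbTE nd'd.
rewrite count_nseq /=; case: eqP => [/w_inj d_d'|]; last by rewrite mul0n.
by rewrite d_d' eqxx in nd'd.
Qed.

Lemma mem_item_sizes g k : k \in item_sizes g -> exists d, k = w d.
Proof.
by case/flatten_mapP => d _; rewrite mem_nseq => /andP[_ /eqP ->]; exists d.
Qed.

Lemma load_le_Cmax j g : is_pattern j g -> (load g <= Cmax C)%N.
Proof. by case/andP => _ /leq_trans; apply; exact: (leq_bigmax (F := C) j). Qed.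

Lemma load_ltn_node j g : is_pattern j g -> (load g < (Cmax C).+1)%N.
Proof. by move=> /load_le_Cmax. Qed.

Lemma load_eq0 g : (load g == 0%N) = [forall d, (g d : nat) == 0%N].
Proof.
rewrite /load sum_nat_eq0; apply: eq_forallb => d /=.
by rewrite muln_eq0 (negbTE (lt0n_neq0 (w_gt0 d))) orbF.
Qed.

Definition pattern_walk (g : pat q) : seq (nat * nat) := walk_arcs 0 (item_sizes g).

Definition to_arc (u : nat * nat) : node * node := (inord u.1, inord u.2).

Definition pattern_arcs (g : pat q) : seq (node * node) :=
  map to_arc (pattern_walk g).

Lemma pattern_walk_arc j g u : is_pattern j g -> u \in pattern_walk g ->
  [/\ (to_arc u).1 = u.1 :> nat, (to_arc u).2 = u.2 :> nat,
      is_arc w (to_arc u) & (0 < u.2)%N].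
Proof.
move=> Pg /mem_walk_arcs[k /mem_item_sizes[d ->] [u2E u2_le]].
rewrite add0n sumn_item_sizes in u2_le.
have u2_lt : (u.2 < (Cmax C).+1)%N.
  by rewrite ltnS (leq_trans u2_le (load_le_Cmax Pg)).
have u1_lt : (u.1 < (Cmax C).+1)%N by apply: leq_ltn_trans u2_lt; rewrite u2E leq_addr.
rewrite /= !inordK //; split => //.
  by apply/existsP; exists d; rewrite /= !inordK // u2E.
by rewrite u2E (leq_trans (w_gt0 d)) // leq_addl.
Qed.

Lemma count_pattern_arcs j g (Q : nat -> nat -> bool) : is_pattern j g ->
  count (fun e : node * node => is_arc w e && Q e.1 e.2) (pattern_arcs g)
  = count (fun u => Q u.1 u.2) (pattern_walk g).
Proof.
move=> Pg; rewrite count_map; apply: eq_in_count => u.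
by case/(pattern_walk_arc Pg) => u1E u2E arc_u _; rewrite /= arc_u u1E u2E.
Qed.

Lemma pattern_walk_conservation j g b : is_pattern j g ->
  (count (fun u => u.2 == b) (pattern_walk g) + (0 == b) =
   count (fun u => u.1 == b) (pattern_walk g) + (load g == b))%N.
Proof. by rewrite /pattern_walk walk_arcs_conservation add0n sumn_item_sizes. Qed.

Lemma pattern_walk_into0 j g : is_pattern j g ->
  count (fun u => u.2 == 0)%N (pattern_walk g) = 0%N.
Proof.
move=> Pg; rewrite (@eq_in_count _ _ pred0) ?count_pred0 // => u.
by case/(pattern_walk_arc Pg) => _ _ _ u2_gt0; rewrite /= eqn0Ngt u2_gt0.
Qed.

Lemma pattern_walk_items g d :
  count (fun u => u.2 == u.1 + w d)%N (pattern_walk g) = g d.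
Proof. by rewrite /pattern_walk count_walk_arcs_length count_item_sizes. Qed.

Lemma pat_cost_sink_cost j g : is_pattern j g ->
  pat_cost w f c j g = sink_cost f c (inord (load g) : node) j.
Proof.
move=> Pg; rewrite /sink_cost /pat_cost inordK ?(load_ltn_node Pg) // -load_eq0.
by case: (load g == 0%N) => //; rewrite mulrC.
Qed.

Variable p : 'I_m -> pat q -> R.
Hypothesis p_feas : cs_feasible w C p.

Definition arc_flow (e : node * node) : R :=
  \sum_(j < m) \sum_(g | is_pattern j g) p j g * (count_mem e (pattern_arcs g))%:R.

Definition sink_flow (a : node) (j : 'I_m) : R :=
  \sum_(g | is_pattern j g && (load g == a)) p j g.

Lemma sum_arc_flow (Q : pred (node * node)) :
  \sum_(e | Q e) arc_flow e =
  \sum_(j < m) \sum_(g | is_pattern j g) p j g * (count Q (pattern_arcs g))%:R.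
Proof.
rewrite /arc_flow exchange_big; apply: eq_bigr => j _.
rewrite exchange_big; apply: eq_bigr => g _.
by rewrite -mulr_sumr -natr_sum sum_count_mem.
Qed.

Lemma sink_flowE a j :
  sink_flow a j = \sum_(g | is_pattern j g) p j g * (load g == a)%:R.
Proof.
rewrite /sink_flow big_mkcondr; apply: eq_bigr => g _.
by case: (load g == a); rewrite ?mulr1 ?mulr0.
Qed.

Lemma sum_sink_flow j (F : node -> R) :
  \sum_(a : node) F a * sink_flow a j =
  \sum_(g | is_pattern j g) F (inord (load g)) * p j g.
Proof.
rewrite (partition_big (fun g => inord (load g) : node) xpredT) //=.
apply: eq_bigr => a _; rewrite /sink_flow mulr_sumr.
apply: eq_big => [g | g /andP[_ /eqP ->]]; last by rewrite inord_val.
case Pg: (is_pattern j g) => //=; have load_lt := load_ltn_node Pg.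
apply/eqP/eqP => [load_a | <-]; last by rewrite inordK.
by apply: val_inj; rewrite /= inordK -?load_a.
Qed.

Lemma arc_flow_ge0 e : 0 <= arc_flow e.
Proof.
case: p_feas => p_ge0 _.
apply: sumr_ge0 => j _; apply: sumr_ge0 => g Pg.
by rewrite mulr_ge0 ?ler0n ?p_ge0.
Qed.

Lemma sink_flow_01 a j : 0 <= sink_flow a j <= 1.
Proof.
case: p_feas => p_ge0 [_ p_sum1]; apply/andP; split.
  by apply: sumr_ge0 => g /andP[Pg _]; exact: p_ge0.
rewrite sink_flowE -[X in _ <= X](p_sum1 j); apply: ler_sum => g Pg.
by case: (_ == _); rewrite ?mulr1 ?mulr0 ?p_ge0.
Qed.

Lemma arc_flow_conservation (b : node) : (0 < b)%N ->
  \sum_(e | is_arc w e && ((e.2 : nat) == b)) arc_flow e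
  - \sum_(e | is_arc w e && ((e.1 : nat) == b)) arc_flow e
  - \sum_(j < m) sink_flow b j = 0.
Proof.
move=> b_gt0; rewrite !sum_arc_flow (eq_bigr _ (fun j _ => sink_flowE b j)).
rewrite -!sumrB; apply: big1 => j _; rewrite -!sumrB; apply: big1 => g Pg.
rewrite (count_pattern_arcs (fun _ y => y == b) Pg).
rewrite (count_pattern_arcs (fun y _ => y == b) Pg).
have := pattern_walk_conservation b Pg.
rewrite eq_sym (negbTE (lt0n_neq0 b_gt0)) addn0 => ->.
by rewrite natrD; ring.
Qed.

Lemma arc_flow_source (b : node) : (b : nat) = 0%N ->
  - \sum_(e | is_arc w e && ((e.1 : nat) == 0%N)) arc_flow e
  - \sum_(j < m) sink_flow b j = - m%:R.
Proof.
case: p_feas => _ [_ p_sum1] b0.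
rewrite sum_arc_flow (eq_bigr _ (fun j _ => sink_flowE b j)) b0 -opprD -big_split /=.
congr (- _); rewrite -[m in m%:R]card_ord -sumr_const; apply: eq_bigr => j _.
rewrite -big_split -[RHS](p_sum1 j); apply: eq_bigr => g Pg /=.
rewrite -mulrDr (count_pattern_arcs (fun y _ => y == 0%N) Pg) -natrD.
by have := pattern_walk_conservation 0 Pg; rewrite (pattern_walk_into0 Pg) => <-; rewrite mulr1.
Qed.

Lemma sink_flow_bin j : \sum_(a : node | (a <= C j)%N) sink_flow a j = 1.
Proof.
case: p_feas => _ [_ p_sum1].
rewrite big_mkcond /= (eq_bigr (fun a : node => ((a <= C j)%N)%:R * sink_flow a j)).
  rewrite sum_sink_flow -[RHS](p_sum1 j); apply: eq_bigr => g Pg.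
  by rewrite inordK ?(load_ltn_node Pg) // (andP Pg).2 mul1r.
by move=> a _; case: ifP; rewrite ?mul1r ?mul0r.
Qed.

Lemma arc_flow_items d :
  \sum_(e | is_arc w e && ((e.2 : nat) == e.1 + w d)%N) arc_flow e = (q d)%:R.
Proof.
case: p_feas => _ [p_items _].
rewrite sum_arc_flow -(p_items d); apply: eq_bigr => j _; apply: eq_bigr => g Pg.
by rewrite (count_pattern_arcs (fun x y => y == x + w d)%N Pg) pattern_walk_items mulrC.
Qed.

Lemma sink_flow_over_capacity j (a : node) : (C j < a)%N -> sink_flow a j = 0.
Proof.
move=> Cj_lt_a; rewrite /sink_flow big_pred0 // => g.
apply/andP => -[/andP[_ load_le] /eqP load_a].
by move: load_le; rewrite -/(load g) load_a leqNgt Cj_lt_a.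
Qed.

Lemma pattern_flow_feasible : af_feasible w q arc_flow sink_flow.
Proof.
split; first by move=> e _; exact: arc_flow_ge0.
split; first exact: sink_flow_01.
split; first exact: arc_flow_conservation.
split; first exact: arc_flow_source.
split; first exact: sink_flow_bin.
split; first exact: arc_flow_items.
exact: sink_flow_over_capacity.
Qed.

Lemma pattern_flow_cost : af_obj f c sink_flow = cs_obj w C f c p.
Proof.
apply: eq_bigr => j _; rewrite (sum_sink_flow j (fun a => sink_cost f c a j)).
by apply: eq_bigr => g Pg; rewrite pat_cost_sink_cost.
Qed.

End PatternPaths.

Local Open Scope ring_scope.

Theorem proposition3 (R : realType) (n m : nat) (w q : 'I_n -> nat)
    (C : 'I_m -> nat) (f c : 'I_m -> R) :
  (forall d, (0 < w d)%N) ->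
  injective w ->
  (forall d, (1 <= q d)%N) ->
  (forall j, (0 < C j)%N) ->
  (forall j, 0 <= f j) ->
  (forall j, 0 <= c j) ->
  (exists p, @cs_feasible R n m w q C p) ->
  (@z3 R n m w q C f c <= @z2 R n m w q C f c)%E.
Proof.
move=> w_gt0 w_inj _ _ _ _ _.
apply/ereal_infP => _ [p p_feas <-]; apply: ge_ereal_inf.
exists (af_obj f c (sink_flow w (C := C) p))%:E; last by rewrite (pattern_flow_cost C f c w_gt0).
exists (sink_flow w p) => //; exists (arc_flow w p).
exact: (pattern_flow_feasible w_gt0 w_inj p_feas).
Qed.
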